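(* Let $A\subseteq X$ be a clopen set with $A\neq\emptyset$, $A\neq X$. Then in $G=S(2^\infty)\ltimes \widetilde C(X;\mathbb{Z}_2)$ one has $\mathrm{fpc}(\widetilde f_A)=\{e,\widetilde f_A\}$.
   Context: For a group $G$ and $g\in G$, $C_G(g)$ is the centralizer of $g$ and $\mathrm{fpc}(g)=\{h\in G:\ \{t^{-1}ht: t\in C_G(g)\}\text{ is finite}\}$. For $n\ge1$ let $S(2^n)$ be the symmetric group of the finite set $\{0,1\}^n$, embedded in $S(2^{n+1})$ via $s\mapsto\tilde s$, $\tilde s(x,y)=(s(x),y)$ ($x\in\{0,1\}^n$, $y\in\{0,1\}$); $S(2^\infty)=\bigcup_n S(2^n)$. Let $X=\{0,1\}^{\mathbb N}$; $S(2^\infty)$ acts on $X$ by homeomorphisms via $s(x,y)=(s(x),y)$ for $s\in S(2^n)$, $x\in\{0,1\}^n$, $y\in\{0,1\}^{\mathbb N}$. $C(X;\mathbb Z_2)$ is the abelian group of continuous maps $X\to\mathbb Z_2$ under pointwise addition; its elements are $f_A=\mathbf 1_A$ for clopen $A\subseteq X$, with $f_Af_B=f_{A\triangle B}$. $S(2^\infty)$ acts by $g\cdot f_A=f_{g(A)}$. The constant functions $\{f_\emptyset,f_X\}$ form an invariant subgroup and $\widetilde C(X;\mathbb Z_2)$ is the quotient group; $\widetilde f_A$ denotes the class of $f_A$ (so $\widetilde f_A=\widetilde f_{X\setminus A}$). $G=S(2^\infty)\ltimes\widetilde C(X;\mathbb Z_2)$, with $g\widetilde f_Ag^{-1}=\widetilde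 f_{g(A)}$. *)

From mathcomp Require Import all_boot all_order all_fingroup.
From mathcomp Require Import all_classical all_reals all_analysis.
From Stdlib Require List.
Set Implicit Arguments. Unset Strict Implicit. Unset Printing Implicit Defensive.
Local Open Scope classical_set_scope.

Definition X := cantor_space.

Definition prefix (n : nat) (x : X) : n.-tuple bool :=
  [tuple x (nat_of_ord i) | i < n].

(* Action of s in S(2^n) on X:  s(x,y) = (s(x), y). *)
Definition sact (n : nat) (s : {perm n.-tuple bool}) (x : X) : X :=
  fun i => match ltnP i n with
           | LtnNotGeq H => tnth (s (prefix n x)) (Ordinal H)
           | _ => x i
           end.

(* g : X -> X belongs to S(2^oo) = \bigcup_n S(2^n) (identified with its
   (faithful) action on X). *)
Definition inS (g : X -> X) : Prop :=
  exists n (s : {perm n.-tuple bool}), forall x, g x = sact s x.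

(* Elements of G = S(2^oo) |x C~(X;Z_2): the pair (A, g) denotes
   f~_A * g, with A clopen and g in S(2^oo). *)
Record Gelt := MkG {
  Gset : set X;
  Gperm : X -> X;
  Gset_clopen : clopen Gset;
  Gperm_inS : inS Gperm }.

Definition symdiff (A B : set X) : set X := (A `\` B) `|` (B `\` A).

(* Raw representatives and their product:
   (f_A1 g1)(f_A2 g2) = f_A1 (g1 f_A2 g1^-1) g1 g2 = f_(A1 Δ g1(A2)) g1 g2. *)
Definition Graw := (set X * (X -> X))%type.
Definition graw (a : Gelt) : Graw := (Gset a, Gperm a).
Definition rmul (a b : Graw) : Graw :=
  (symdiff a.1 (a.2 @` b.1), a.2 \o b.2).

(* Equality in G: f~_A = f~_(X \ A). *)
Definition Geq (a b : Graw) : Prop :=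
  a.2 = b.2 /\ (a.1 = b.1 \/ a.1 = ~` b.1).

Definition Ge : Graw := (set0, id).
Definition Gf (A : set X) : Graw := (A, id).

(* k is a conjugate t^-1 h t with t in C_G(g), i.e. t g = g t and h t = t k. *)
Definition conj_by_centralizer (g h k : Gelt) : Prop :=
  exists t : Gelt, Geq (rmul (graw t) (graw g)) (rmul (graw g) (graw t)) /\
                   Geq (rmul (graw h) (graw t)) (rmul (graw t) (graw k)).

(* fpc(g): those h whose C_G(g)-conjugacy orbit is finite (finitely many
   elements of G, i.e. classes of representatives up to Geq). *)
Definition fpc (g : Gelt) : set Gelt :=
  [set h | exists L : seq Gelt, forall k, conj_by_centralizer g h k ->
             exists2 k', Stdlib.Lists.List.In k' L & Geq (graw k) (graw k')].

From Pilot Require Import Defs.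
From mathcomp Require Import all_boot all_order all_fingroup.
From mathcomp Require Import all_classical all_reals all_analysis.
Set Implicit Arguments. Unset Strict Implicit. Unset Printing Implicit Defensive.
Local Open Scope classical_set_scope.

(* Every f_T commutes with f_A, and conjugating h = f_H s by f_T replaces H by
   T Δ H Δ s(T).  If s moves a point x0 it moves a whole cylinder C around x0 off
   itself, so the sets T_j = C ∩ {y_(n+j) = 1} give infinitely many distinct
   conjugates of h.  If s = id but H separates two points a, b of A (or of X \ A),
   the transpositions exchanging ever smaller subcylinders around a and b preserve
   A, hence centralise f_A, and move H to infinitely many distinct sets.  Otherwise
   H is one of the sets empty, A, X \ A, X, i.e. h is e or f_A; such an h is fixed
   by every t centralising f_A, because t maps A onto A or onto X \ A. *)

(* Otherwise [seq.prefix] would shadow [Defs.prefix]. *)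
Notation prefix := Defs.prefix.

Lemma image_cancel (T : Type) (f g : T -> T) (A : set T) :
  cancel f g -> cancel g f -> f @` A = g @^-1` A.
Proof.
move=> fK gK; apply/seteqP; split=> [_ [x Ax <-]|y Agy]; first by rewrite /= fK.
by exists (g y); rewrite ?gK.
Qed.

Lemma preimageK (T : Type) (f g : T -> T) (A : set T) :
  cancel f g -> f @^-1` (g @^-1` A) = A.
Proof. by move=> fK; apply/seteqP; split=> x /=; rewrite fK. Qed.

Lemma eq_set_mem (T : Type) (P Q : set T) : (forall x, (x \in P) = (x \in Q)) -> P = Q.
Proof.
move=> PQ; apply/seteqP; split=> x; have := PQ x.
  by move=> + /mem_set Px; rewrite Px => /esym/set_mem.
by move=> + /mem_set Qx; rewrite Qx => /set_mem.
Qed.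

Lemma In_nth_ord (T : Type) (x : T) (L : seq T) :
  List.In x L -> exists i : 'I_(size L), nth x L i = x.
Proof.
elim: L => //= y L IH [<-|/IH [i xi]]; first by exists ord0.
by exists (lift ord0 i); rewrite lift0.
Qed.

Lemma finite_cover_collision (T : Type) (R : T -> T -> Prop) (k : nat -> T) (L : seq T) :
  (forall j, exists2 l, List.In l L & R (k j) l) ->
  exists j j', j <> j' /\ exists l, R (k j) l /\ R (k j') l.
Proof.
move=> cover.
have /choice [f fP] : forall j : 'I_(size L).+1, exists i : 'I_(size L), R (k j) (nth (k 0) L i).
  move=> j; have [l lL kl] := cover j; have [i li] := In_nth_ord lL.
  by exists i; rewrite (set_nth_default l) ?li.
apply: contrapT => nocoll.
suff /leq_card : injective f by rewrite !card_ord ltnn.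
move=> j j' fjj'; apply: val_inj; apply: contrapT => neq; apply: nocoll.
by exists j, j'; split=> //; exists (nth (k 0) L (f j)); rewrite {2}fjj'.
Qed.

(** * Sets up to complement *)

Lemma in_symdiff (P Q : set X) x : (x \in symdiff P Q) = (x \in P) (+) (x \in Q).
Proof. by rewrite /symdiff in_setU !in_setD; case: (x \in P); case: (x \in Q). Qed.

Lemma symdiffC (P Q : set X) : symdiff P Q = symdiff Q P.
Proof. by apply: eq_set_mem => x; rewrite !in_symdiff addbC. Qed.

Lemma clopen_symdiff (P Q : set X) : clopen P -> clopen Q -> clopen (symdiff P Q).
Proof.
move=> cP cQ; apply: clopenU; rewrite setDE; apply: clopenI => //; exact: clopenC.
Qed.

Definition eq_upto_compl (T : Type) (P Q : set T) : Prop := P = Q \/ P = ~` Q.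

Section EqUptoCompl.
Variable T : Type.
Implicit Types P Q S : set T.

Lemma eq_upto_compl_sym P Q : eq_upto_compl P Q -> eq_upto_compl Q P.
Proof. by case=> ->; [left | right; rewrite setCK]. Qed.

Lemma eq_upto_compl_trans P Q S :
  eq_upto_compl P Q -> eq_upto_compl Q S -> eq_upto_compl P S.
Proof. by case=> -> [] ->; rewrite ?setCK; [left | right | right | left]. Qed.

Lemma eq_upto_compl_preimage (f : T -> T) P Q :
  eq_upto_compl P Q -> eq_upto_compl (f @^-1` P) (f @^-1` Q).
Proof. by case=> ->; [left | right; rewrite preimage_setC]. Qed.

Lemma eq_upto_compl_preimage_fixed (f : T -> T) P Q :
  eq_upto_compl (f @^-1` P) P -> eq_upto_compl Q P -> eq_upto_compl (f @^-1` Q) Q.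
Proof.
move=> fP QP; apply: eq_upto_compl_trans (eq_upto_compl_preimage f QP) _.
exact: eq_upto_compl_trans fP (eq_upto_compl_sym QP).
Qed.

Lemma not_eq_upto_compl P Q x y :
  (x \in P) != (x \in Q) -> (y \in P) = (y \in Q) -> ~ eq_upto_compl P Q.
Proof. by move=> + + [] E; rewrite E ?in_setC ?eqxx //; case: (y \in Q). Qed.

End EqUptoCompl.

Lemma eq_upto_compl_symdiff2l (S P Q : set X) :
  eq_upto_compl (symdiff S P) (symdiff S Q) <-> eq_upto_compl P Q.
Proof.
split=> [[] E | [] ->]; [left | right | by left | right].
- apply: eq_set_mem => x; move/(congr1 (fun A => x \in A)): E.
  by rewrite !in_symdiff; case: (x \in S); case: (x \in P); case: (x \in Q).
- apply: eq_set_mem => x; move/(congr1 (fun A => x \in A)): E.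
  by rewrite !in_setC !in_symdiff; case: (x \in S); case: (x \in P); case: (x \in Q).
- by apply: eq_set_mem => x; rewrite in_setC !in_symdiff in_setC addbN.
Qed.

Lemma split_or_eq_upto_compl (T : Type) (H R : set T) :
  (R `&` H !=set0 /\ R `\` H !=set0) \/ (~` R `&` H !=set0 /\ ~` R `\` H !=set0) \/
  eq_upto_compl H R \/ eq_upto_compl H set0.
Proof.
have [|/not_andP nR] := pselect (R `&` H !=set0 /\ R `\` H !=set0); first by left.
have [|/not_andP nC] := pselect (~` R `&` H !=set0 /\ ~` R `\` H !=set0); first by right; left.
right; right; move: nR nC => [] /forallNP nR [] /forallNP nC.
- right; left; apply/seteqP; split=> x // Hx.
  by have [Rx|nRx] := pselect (R x); [case: (nR x) | case: (nC x)].
- left; right; apply/seteqP; split=> x; first by move=> Hx Rx; apply: (nR x).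
  by move=> nRx; apply: contrapT => nHx; apply: (nC x).
- left; left; apply/seteqP; split=> x; last by move=> Rx; apply: contrapT => nHx; apply: (nR x).
  by move=> Hx; apply: contrapT => nRx; apply: (nC x).
- right; right; apply/seteqP; split=> [x _ [] | x _].
  by apply: contrapT => nHx; have [Rx|nRx] := pselect (R x); [apply: (nR x) | apply: (nC x)].
Qed.

(** * Cylinders and the action of S(2^n) *)

Definition agree n (x y : X) := forall i, (i < n)%N -> x i = y i.
Definition cyl n (x : X) : set X := [set y | agree n y x].

Lemma agree_le m n x y : (m <= n)%N -> agree n x y -> agree m x y.
Proof. by move=> le_mn xy i lt_im; apply: xy; exact: leq_trans lt_im le_mn. Qed.

Lemma agree_trans n x y z : agree n x y -> agree n y z -> agree n x z.
Proof. by move=> xy yz i lt_in; rewrite xy ?yz. Qed.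

Lemma tnth_prefix n x (i : 'I_n) : tnth (prefix n x) i = x i.
Proof. by rewrite tnth_mktuple. Qed.

Lemma prefix_eqP n x y : prefix n x = prefix n y <-> agree n x y.
Proof.
split=> [xy i lt_in | xy]; last by apply: eq_from_tnth => i; rewrite !tnth_prefix xy.
by rewrite -(tnth_prefix x (Ordinal lt_in)) xy tnth_prefix.
Qed.

Section PrefixAction.
Variables (n : nat) (s : {perm n.-tuple bool}).

Lemma sact_ge x i : (n <= i)%N -> sact s x i = x i.
Proof. by rewrite /sact; case: ltnP => // lt_in; rewrite leqNgt lt_in. Qed.

Lemma sact_lt x i (lt_in : (i < n)%N) :
  sact s x i = tnth (s (prefix n x)) (Ordinal lt_in).
Proof.
rewrite /sact; case: ltnP => [lt_in'|]; last by rewrite leqNgt lt_in.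
by rewrite (bool_irrelevance lt_in' lt_in).
Qed.

Lemma prefix_sact x : prefix n (sact s x) = s (prefix n x).
Proof.
apply: eq_from_tnth => i; rewrite tnth_prefix (sact_lt _ (ltn_ord i)).
by congr tnth; exact: val_inj.
Qed.

Lemma sact_eq x y : s (prefix n x) = prefix n y ->
  (forall i, (n <= i)%N -> x i = y i) -> sact s x = y.
Proof.
move=> sxy tail; apply: functional_extensionality_dep => i.
case: (ltnP i n) => [lt_in|le_ni]; last by rewrite sact_ge // tail.
by rewrite (sact_lt _ lt_in) sxy tnth_prefix.
Qed.

Lemma sact_id x : s (prefix n x) = prefix n x -> sact s x = x.
Proof. by move=> sx; apply: sact_eq. Qed.

Lemma sact_agree M x y : (n <= M)%N -> agree M x y -> agree M (sact s x) (sact s y).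
Proof.
move=> le_nM xy i lt_iM; case: (ltnP i n) => [lt_in|le_ni]; last by rewrite !sact_ge ?xy.
by rewrite !(sact_lt _ lt_in); congr (tnth (s _) _); apply/prefix_eqP; exact: agree_le xy.
Qed.

Lemma inS_sact : inS (sact s).
Proof. by exists n, s. Qed.

End PrefixAction.

Lemma sactK n (s : {perm n.-tuple bool}) : cancel (sact s) (sact s^-1).
Proof. by move=> x; apply: sact_eq => [|i le_ni]; rewrite ?prefix_sact ?permK ?sact_ge. Qed.

Lemma sactVK n (s : {perm n.-tuple bool}) : cancel (sact s^-1) (sact s).
Proof. by move=> x; apply: sact_eq => [|i le_ni]; rewrite ?prefix_sact ?permKV ?sact_ge. Qed.

Lemma sact_inj n (s : {perm n.-tuple bool}) : injective (sact s).
Proof. exact: can_inj (sactK s). Qed.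


Lemma inS_id : inS id.
Proof. by exists 0%N, 1%g => x; rewrite sact_id ?perm1. Qed.

Lemma Gperm_sact (g : Gelt) : exists n (s : {perm n.-tuple bool}), Gperm g = sact s.
Proof.
by have [n [s gs]] := Gperm_inS g; exists n, s; apply: functional_extensionality_dep.
Qed.

Lemma sact_cyl_disjoint n (s : {perm n.-tuple bool}) x y :
  sact s x <> x -> cyl n x y -> ~ cyl n x (sact s y).
Proof.
move=> sx /prefix_eqP yx /prefix_eqP; rewrite prefix_sact yx => sxx.
by apply: sx; exact: sact_id.
Qed.

Lemma coord_clopen i (b : bool) : clopen [set y : X | y i = b].
Proof.
apply: (@preimage_clopen _ _ (fun y : X => y i) [set b]).
  by split; [exact: discrete_open | exact: discrete_closed].
exact: (@proj_continuous nat (fun=> bool) i).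
Qed.

Lemma cyl_clopen n x : clopen (cyl n x).
Proof.
elim: n => [|n IH].
  rewrite (_ : cyl 0 x = setT); first exact: clopenT.
  by apply/seteqP; split=> // y _ [].
rewrite (_ : cyl n.+1 x = cyl n x `&` [set y | y n = x n]).
  by apply: clopenI => //; exact: coord_clopen.
apply/seteqP; split=> [y xy | y [xy yn] i]; first by split=> [i /ltnW|]; apply: xy.
by rewrite ltnS leq_eqVlt => /orP[/eqP->|]; [| exact: xy].
Qed.

Lemma open_cyl_nbhs (S : set X) x : open S -> S x -> exists n, cyl n x `<=` S.
Proof.
move=> oS Sx; apply: contrapT => /forallNP noncyl.
have /choice [y yP] : forall n, exists y, cyl n x y /\ ~ S y.
  by move=> n; have /existsNP [y /not_implyP] := noncyl n; exists y.
have y_cvg : y @ \oo --> (x : X).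
  apply/cvg_sup => i U [V] [[W] oW <-] Wxi WU.
  apply: (filterS WU); rewrite nbhs_simpl; exists i.+1 => // m /= lt_im.
  by rewrite /= (proj1 (yP m)).
have [m _ Sy] : \forall m \near \oo, S (y m) by apply: y_cvg; exact: open_nbhs_nbhs.
exact: (proj2 (yP m)) (Sy m (leqnn m)).
Qed.

Lemma cyl_nbhs_open (S : set X) : (forall x, S x -> exists n, cyl n x `<=` S) -> open S.
Proof.
move=> cylS; rewrite openE => x Sx; have [n xS] := cylS x Sx.
by apply: (filterS xS); apply: open_nbhs_nbhs; split; [exact: (cyl_clopen n x).1 |].
Qed.

Lemma open_sact_preimage n (s : {perm n.-tuple bool}) (S : set X) :
  open S -> open (sact s @^-1` S).
Proof.
move=> oS; apply: cyl_nbhs_open => x Ssx; have [m sxS] := open_cyl_nbhs oS Ssx.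
exists (maxn m n) => y xy; apply: sxS; apply: (agree_le (leq_maxl m n)).
by apply: sact_agree xy; exact: leq_maxr.
Qed.

Lemma clopen_sact_preimage n (s : {perm n.-tuple bool}) (S : set X) :
  clopen S -> clopen (sact s @^-1` S).
Proof.
case=> oS cS; split; first exact: open_sact_preimage.
by rewrite -openC preimage_setC; apply: open_sact_preimage; rewrite openC.
Qed.

Lemma clopen_sact_image n (s : {perm n.-tuple bool}) (S : set X) :
  clopen S -> clopen (sact s @` S).
Proof. by rewrite (image_cancel _ (sactK s) (sactVK s)); exact: clopen_sact_preimage. Qed.

Definition splice n (x y : X) : X := fun i => if (i < n)%N then x i else y i.
Definition flag n (x : X) j : X := splice n x (fun i => i == n + j).

Lemma splice_agree n x y : agree n (splice n x y) x.
Proof. by move=> i lt_in; rewrite /splice lt_in. Qed.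

Lemma splice_ge n x y i : (n <= i)%N -> splice n x y i = y i.
Proof. by rewrite /splice leqNgt => /negbTE->. Qed.

Lemma flag_at n x j j' : flag n x j (n + j') = (j' == j).
Proof. by rewrite /flag splice_ge ?leq_addr // eqn_add2l. Qed.

Section Transposition.
Variables (M : nat) (u v : M.-tuple bool).
Local Notation tau := (sact (tperm u v)).

Lemma sact_tperm_invol : involutive tau.
Proof. by move=> x; rewrite -{2}(sactK (tperm u v) x) tpermV. Qed.

Lemma sact_tperm_out y : prefix M y != u -> prefix M y != v -> tau y = y.
Proof. by move=> yu yv; apply: sact_id; apply: tpermD; rewrite eq_sym. Qed.

Lemma sact_tperm_preimage (R : set X) :
  (forall y, prefix M y = u -> R y) -> (forall y, prefix M y = v -> R y) ->
  tau @^-1` R = R.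
Proof.
move=> uR vR; apply/seteqP; split=> y /=.
  have [yu _|yu] := eqVneq (prefix M y) u; first exact: uR.
  have [yv _|yv] := eqVneq (prefix M y) v; first exact: vR.
  by rewrite sact_tperm_out.
have [yu _|yu] := eqVneq (prefix M y) u; first by apply: vR; rewrite prefix_sact yu tpermL.
have [yv _|yv] := eqVneq (prefix M y) v; first by apply: uR; rewrite prefix_sact yv tpermR.
by rewrite sact_tperm_out.
Qed.

End Transposition.

Definition flag_swap N (a b : X) j : X -> X :=
  sact (tperm (prefix (N + j).+1 (flag N a j)) (prefix (N + j).+1 (flag N b j))).

Section FlagSwap.
Variables (N : nat) (a b : X).

Lemma agree_of_prefix_flag x y j :
  prefix (N + j).+1 y = prefix (N + j).+1 (flag N x j) -> agree N y x.
Proof.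
move=> /prefix_eqP yx; apply: agree_trans (splice_agree _ _).
by apply: agree_le yx; exact: leq_trans (leq_addr j N) (leqnSn _).
Qed.

Lemma flag_swap_invol j : involutive (flag_swap N a b j).
Proof. exact: sact_tperm_invol. Qed.

Lemma flag_swap_flag j : flag_swap N a b j (flag N a j) = flag N b j.
Proof.
apply: sact_eq => [|i /(leq_trans (leq_trans (leq_addr j N) (leqnSn _))) le_Ni].
  by rewrite tpermL.
by rewrite /flag !splice_ge.
Qed.

Lemma flag_swap_flag_other j j' : j <> j' -> flag_swap N a b j' (flag N a j) = flag N a j.
Proof.
move=> neq; have /negbTE nj : j' != j by apply/eqP => /esym.
by apply: sact_tperm_out; apply/eqP => /prefix_eqP/(_ (N + j') (ltnSn _)); rewrite !flag_at eqxx nj.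
Qed.

Lemma flag_swap_out j y : ~ agree N y a -> ~ agree N y b -> flag_swap N a b j y = y.
Proof. by move=> ya yb; apply: sact_tperm_out; apply/eqP => /agree_of_prefix_flag. Qed.

Lemma flag_swap_preimage j (R : set X) :
  cyl N a `<=` R -> cyl N b `<=` R -> flag_swap N a b j @^-1` R = R.
Proof.
by move=> aR bR; apply: sact_tperm_preimage => y /agree_of_prefix_flag; [exact: aR | exact: bR].
Qed.

Lemma inS_flag_swap j : inS (flag_swap N a b j).
Proof. exact: inS_sact. Qed.

End FlagSwap.

(** * Conjugacy classes in G *)

Lemma Geq_sym a b : Geq a b -> Geq b a.
Proof. by case=> ab /eq_upto_compl_sym. Qed.

Lemma Geq_trans a b c : Geq a b -> Geq b c -> Geq a c.
Proof. by case=> ab1 ab2 [bc1 bc2]; split; [rewrite ab1 | exact: eq_upto_compl_trans ab2 bc2]. Qed.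

Lemma not_fpc_of_conjugates (g h : Gelt) (k : nat -> Gelt) :
  (forall j, conj_by_centralizer g h (k j)) ->
  (forall j j', j <> j' -> ~ eq_upto_compl (Gset (k j)) (Gset (k j'))) ->
  ~ fpc g h.
Proof.
move=> conj_k distinct [L HL].
have [j [j' [neq [l [kl k'l]]]]] :=
  @finite_cover_collision _ (fun a b => Geq (graw a) (graw b)) k L (fun j => HL _ (conj_k j)).
exact: distinct neq (Geq_trans kl (Geq_sym k'l)).2.
Qed.

Lemma commute_Gf (g t : Gelt) : Gperm g = id ->
  Geq (rmul (graw t) (graw g)) (rmul (graw g) (graw t)) <->
  eq_upto_compl (Gperm t @` Gset g) (Gset g).
Proof.
move=> gid; rewrite /Geq /rmul /= gid image_id [symdiff (Gset g) _]symdiffC.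
split=> [[_ /eq_upto_compl_symdiff2l] // | /(eq_upto_compl_symdiff2l (Gset t))].
by split.
Qed.

Lemma conj_Gf (h t k : Gelt) : Gperm h = id ->
  Geq (rmul (graw h) (graw t)) (rmul (graw t) (graw k)) ->
  Gperm k = id /\ eq_upto_compl (Gperm t @` Gset k) (Gset h).
Proof.
move=> hid; rewrite /Geq /rmul /= hid image_id symdiffC.
have [n [s ->]] := Gperm_sact t; move=> [stk /eq_upto_compl_symdiff2l hk].
split; last exact: eq_upto_compl_sym.
apply: functional_extensionality_dep => x; apply: (@sact_inj _ s).
by move/(congr1 (@^~ x)): stk => /= <-.
Qed.

Lemma eq_upto_compl_sact_image n (s : {perm n.-tuple bool}) (P Q : set X) :
  eq_upto_compl (sact s @` P) Q -> eq_upto_compl P (sact s @^-1` Q).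
Proof.
rewrite (image_cancel _ (sactK s) (sactVK s)) => /(eq_upto_compl_preimage (sact s)).
by rewrite preimageK //; exact: sactK.
Qed.

Lemma fpc_of_trivial (g h : Gelt) : Gperm g = id -> Gperm h = id ->
  eq_upto_compl (Gset h) set0 \/ eq_upto_compl (Gset h) (Gset g) -> fpc g h.
Proof.
move=> gid hid hH; exists [:: h] => k [t [/(commute_Gf _ gid) tg /(conj_Gf hid) [kid tk]]].
exists h; first by left.
split; first by rewrite /= kid hid.
have [n [s ts]] := Gperm_sact t; rewrite ts in tg tk.
apply: eq_upto_compl_trans (eq_upto_compl_sact_image tk) _; case: hH => hH.
  by apply: eq_upto_compl_preimage_fixed hH; rewrite preimage_set0; left.
exact: eq_upto_compl_preimage_fixed (eq_upto_compl_sym (eq_upto_compl_sact_image tg)) hH.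
Qed.

Lemma not_fpc_moving (g h : Gelt) : Gperm g = id -> Gperm h <> id -> ~ fpc g h.
Proof.
move=> gid hmove; have [n [s hs]] := Gperm_sact h.
have [x0 sx0] : exists x0, sact s x0 <> x0.
  apply: contrapT => /forallNP sfix; apply: hmove; rewrite hs.
  by apply: functional_extensionality_dep => x; apply: contrapT; exact: sfix.
pose T j := cyl n x0 `&` [set y : X | y (n + j) = true].
have cT j : clopen (T j) by apply: clopenI; [exact: cyl_clopen | exact: coord_clopen].
pose K j := symdiff (T j) (symdiff (Gset h) (sact s @` T j)).
have cK j : clopen (K j).
  apply: clopen_symdiff => //; apply: clopen_symdiff; first exact: Gset_clopen.
  exact: clopen_sact_image.
have inT z j : cyl n x0 z -> (z \in T j) = z (n + j).
  move=> x0z; rewrite in_setI (mem_set x0z) /=.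
  by apply/idP/idP => [/set_mem -> | zj]; last exact: mem_set.
have notin_sT z j : cyl n x0 z -> (z \in sact s @` T j) = false.
  by move=> x0z; apply: memNset => -[y [x0y _] yz]; apply: (sact_cyl_disjoint sx0 x0y); rewrite yz.
apply: (@not_fpc_of_conjugates g h (fun j => MkG (cK j) (Gperm_inS h))) => [j | j j' neq].
  exists (MkG (cT j) inS_id); split; first by apply/commute_Gf => //; rewrite image_id; left.
  split=> //=; left; rewrite image_id hs; apply: eq_set_mem => x.
  by rewrite !in_symdiff addKb.
have /negbTE nj : j' != j by apply/eqP => /esym.
have fl : cyl n x0 (flag n x0 j) by exact: splice_agree.
have zr : cyl n x0 (splice n x0 (fun=> false)) by exact: splice_agree.
apply: (not_eq_upto_compl (x := flag n x0 j) (y := splice n x0 (fun=> false))).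
  rewrite /= !in_symdiff !(notin_sT _ _ fl) !(inT _ _ fl) !flag_at eqxx nj.
  by case: (_ \in _).
by rewrite /= /K !in_symdiff !(notin_sT _ _ zr) !(inT _ _ zr) !splice_ge ?leq_addr.
Qed.

Lemma not_fpc_splitting (g h : Gelt) (R : set X) :
  Gperm g = id -> eq_upto_compl (Gset g) R -> clopen R -> R <> setT ->
  Gperm h = id -> R `&` Gset h !=set0 -> R `\` Gset h !=set0 -> ~ fpc g h.
Proof.
move=> gid gR cR RT hid [a aRH] [b bRH]; set H := Gset h.
have [z Rz] : exists z, ~ R z.
  apply: contrapT => /forallNP nR; apply: RT; apply/seteqP; split=> // x _.
  exact: contrapT.
have cH : clopen H := Gset_clopen h.
have [Na aN] := open_cyl_nbhs (clopenI cR cH).1 aRH.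
have [Nb bN] := open_cyl_nbhs (clopenI cR (clopenC set0 cH)).1 bRH.
pose N := maxn Na Nb; pose tau := flag_swap N a b.
have aRH' : cyl N a `<=` R `&` H by move=> y /(agree_le (leq_maxl _ _)) /aN.
have bRH' : cyl N b `<=` R `\` H by move=> y /(agree_le (leq_maxr _ _)) /bN.
have tauR j : tau j @^-1` R = R.
  by apply: flag_swap_preimage => y; [move/aRH' => [] | move/bRH' => []].
have tau_z j : tau j z = z by apply: flag_swap_out => [/aRH' | /bRH'] [].
have cK j : clopen (tau j @^-1` H) by exact: clopen_sact_preimage.
have in_tau j x : (x \in tau j @^-1` H) = (tau j x \in H) by [].
have tau_image j S : tau j @` S = tau j @^-1` S by apply: image_cancel; exact: flag_swap_invol.
apply: (@not_fpc_of_conjugates g h (fun j => MkG (cK j) inS_id)) => [j | j j' neq].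
  exists (MkG clopen0 (inS_flag_swap N a b j)); split.
    apply/commute_Gf => //=; rewrite tau_image.
    by apply: eq_upto_compl_preimage_fixed gR; rewrite tauR; left.
  split=> /=; first by rewrite hid.
  left; rewrite image_set0 tau_image preimageK; last exact: flag_swap_invol.
  by apply: eq_set_mem => x; rewrite !in_symdiff in_set0 addbF.
apply: (not_eq_upto_compl (x := flag N a j) (y := z)) => /=; last by rewrite !in_tau !tau_z.
rewrite !in_tau /tau flag_swap_flag flag_swap_flag_other // (mem_set (aRH' _ (splice_agree _ _)).2).
by rewrite (memNset (bRH' _ (splice_agree _ _)).2).
Qed.

Theorem lemma3p3 (A : set X) (hA : clopen A) (hA0 : A <> set0) (hAX : A <> setT)
  (fA : Gelt) (hfA : Geq (graw fA) (Gf A)) :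
  forall h : Gelt, fpc fA h <-> (Geq (graw h) Ge \/ Geq (graw h) (Gf A)).
Proof.
case: hfA => /= fid fAA h; split=> [hfpc | hh].
  have hid : Gperm h = id by apply: contrapT => /(not_fpc_moving fid).
  have [[AH AnH] | [[CH CnH] | [HA | H0]]] := split_or_eq_upto_compl (Gset h) A.
  - by case: (not_fpc_splitting fid fAA hA hAX hid AH AnH).
  - have fAC : eq_upto_compl (Gset fA) (~` A) by case: fAA => ->; [right | left]; rewrite ?setCK.
    have CT : ~` A <> setT by move=> CAT; apply: hA0; rewrite -[A]setCK CAT setCT.
    by case: (not_fpc_splitting fid fAC (clopenC set0 hA) CT hid CH CnH).
  - by right.
  - by left.
apply: fpc_of_trivial fid _ _; first by case: hh => -[].
case: hh => -[_ hH]; [by left | right].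
exact: eq_upto_compl_trans hH (eq_upto_compl_sym fAA).
Qed.
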